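(* Let $\mathcal{C}=(\mathcal{T},\mathcal{I},\mathcal{R})$ be an extraction context with thresholds \textit{minsupp} and \textit{minbond}. Then $\mathcal{M}in\mathcal{MM}ax\mathcal{CR}=\mathcal{M}ax\mathcal{CRCP}\cup\mathcal{M}in\mathcal{MRCP}$, with each element $J$ recorded together with $\mathit{Supp}(\wedge J)$ and $\mathit{bond}(J)$, is an approximate concise representation of the set $\mathcal{RCP}$ of rare correlated patterns; that is, for every pattern $I\subseteq\mathcal{I}$, the recorded data alone suffice to decide whether $I\in\mathcal{RCP}$.
   Context: An extraction context is a triple $\mathcal{C}=(\mathcal{T},\mathcal{I},\mathcal{R})$ with $\mathcal{T}$ a finite set of transactions, $\mathcal{I}$ a finite set of items and $\mathcal{R}\subseteq\mathcal{T}\times\mathcal{I}$. For a pattern $I\subseteq\mathcal{I}$: $\mathit{Supp}(\wedge I)=|\{t:\forall i\in I,(t,i)\in\mathcal{R}\}|$, $\mathit{Supp}(\vee I)=|\{t:\exists i\in I,(t,i)\in\mathcal{R}\}|$, and for nonempty $I$, $\mathit{bond}(I)=\mathit{Supp}(\wedge I)/\mathit{Supp}(\vee I)$ (with $\mathit{bond}(\emptyset)=+\infty$ by convention). $\mathcal{CP}=\{I:\mathit{bond}(I)\ge\textit{minbond}\}$; $\mathcal{RCP}=\{I\in\mathcal{CP}:\mathit{Supp}(\wedge I)<\textit{minsupp}\}$. $\mathcal{CRCP}=\{I\in\mathcal{RCP}:\forall I_1\supsetneq I,\ \mathit{bond}(I)>\mathit{bond}(I_1)\}$; $\mathcal{MRCP}=\{I\in\mathcal{RCP}:\forall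 I_1\subsetneq I,\ \mathit{bond}(I)<\mathit{bond}(I_1)\}$. $\mathcal{M}ax\mathcal{CP}=\{I\in\mathcal{CP}:\forall I_1\supsetneq I,\ \mathit{bond}(I_1)<\textit{minbond}\}$ and $\mathcal{M}ax\mathcal{CRCP}=\mathcal{CRCP}\cap\mathcal{M}ax\mathcal{CP}$. $\mathcal{M}in\mathcal{RP}$ is the set of patterns $I$ with $\mathit{Supp}(\wedge I)<\textit{minsupp}$ whose proper subsets all have conjunctive support $\ge\textit{minsupp}$, and $\mathcal{M}in\mathcal{MRCP}=\mathcal{MRCP}\cap\mathcal{M}in\mathcal{RP}$. *)

(* Patterns are finite sets of items; bond takes values in
   the extended rationals \bar rat so that bond(set0) = +oo. *)
From HB Require Import structures.
From mathcomp Require Import all_boot all_order all_algebra.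
From mathcomp Require Export constructive_ereal.
Set Implicit Arguments. Unset Strict Implicit. Unset Printing Implicit Defensive.
Import Order.TTheory GRing.Theory Num.Theory.

Section Context.
Variables (Tr Item : finType) (R : {set Tr * Item}).
Variables (minsupp : nat) (minbond : rat).

Definition suppAnd (I : {set Item}) : nat :=
  #|[set t : Tr | [forall i in I, (t, i) \in R]]|.
Definition suppOr (I : {set Item}) : nat :=
  #|[set t : Tr | [exists i in I, (t, i) \in R]]|.

(* bond(I) = Supp(/\I)/Supp(\/I) for nonempty I, +oo for the empty pattern.
   (Mathcomp convention x/0 = 0 applies when Supp(\/I) = 0.) *)
Definition bond (I : {set Item}) : \bar rat :=
  if I == set0 then (+oo)%E
  else ((suppAnd I)%:R / (suppOr I)%:R : rat)%:E.

Definition CP : {set {set Item}} := [set I | (minbond%:E <= bond I)%E].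
Definition RCP : {set {set Item}} := [set I in CP | suppAnd I < minsupp].
Definition CRCP : {set {set Item}} :=
  [set I in RCP | [forall I1 : {set Item}, (I \proper I1) ==> (bond I1 < bond I)%E]].
Definition MRCP : {set {set Item}} :=
  [set I in RCP | [forall I1 : {set Item}, (I1 \proper I) ==> (bond I < bond I1)%E]].
Definition MaxCP : {set {set Item}} :=
  [set I in CP | [forall I1 : {set Item}, (I \proper I1) ==> (bond I1 < minbond%:E)%E]].
Definition MaxCRCP : {set {set Item}} := CRCP :&: MaxCP.
Definition MinRP : {set {set Item}} :=
  [set I | (suppAnd I < minsupp) &&
           [forall I1 : {set Item}, (I1 \proper I) ==> (minsupp <= suppAnd I1)]].
Definition MinMRCP : {set {set Item}} := MRCP :&: MinRP.
Definition MinMMaxCR : {set {set Item}} := MaxCRCP :|: MinMRCP.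

(* The recorded data: each J in MinMMaxCR together with Supp(/\J) and bond(J);
   patterns outside the representation are recorded as None. *)
Definition rep (J : {set Item}) : option (nat * \bar rat) :=
  if J \in MinMMaxCR then Some (suppAnd J, bond J) else None.

End Context.

(* A pattern I is in RCP iff it lies between two elements of MinMMaxCR.
   Since bond and Supp(/\ _) are antitone, a correlated superset and a rare
   subset force I into RCP.  Conversely, a maximal correlated superset J of I
   is rare (Supp(/\J) <= Supp(/\I)), hence in MaxCRCP; a minimal rare subset
   K of I is correlated (bond K >= bond I), and each proper subset of K is
   frequent, so has strictly larger conjunctive support and, the disjunctive
   support being monotone, strictly larger bond: K is in MinMRCP.  Deciding
   RCP therefore only needs the domain of the recorded data. *)
From mathcomp Require Import all_boot all_order all_algebra.
From mathcomp Require Import constructive_ereal zify.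
Set Implicit Arguments. Unset Strict Implicit. Unset Printing Implicit Defensive.
Import Order.TTheory GRing.Theory Num.Theory.

Section NatRatio.
Variable F : numFieldType.
Local Open Scope ring_scope.

Lemma ler_nat_ratio (a b c d : nat) : (c <= a <= b)%N -> (b <= d)%N ->
  c%:R / d%:R <= a%:R / b%:R :> F.
Proof.
case: b => [|b] /andP[ca ab] bd.
  have -> : c = 0%N by lia.
  by rewrite mul0r invr0 mulr0.
rewrite ler_pdivrMr ?ltr0n; last lia.
by rewrite mulrAC ler_pdivlMr ?ltr0n // -!natrM ler_nat; nia.
Qed.

Lemma ltr_nat_ratio (a b c d : nat) : (a < c <= d)%N -> (d <= b)%N ->
  a%:R / b%:R < c%:R / d%:R :> F.
Proof.
case: b => [|b] /andP[ac cd] db.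
  by rewrite invr0 mulr0 divr_gt0 // ltr0n; lia.
rewrite ltr_pdivrMr ?ltr0n; last lia.
by rewrite mulrAC ltr_pdivlMr ?ltr0n -?natrM ?ltr_nat; nia.
Qed.

End NatRatio.

Section Patterns.
Variables (Tr Item : finType) (R : {set Tr * Item}).
Implicit Types A B I : {set Item}.

Lemma suppAnd_le_suppOr I : I != set0 -> suppAnd R I <= suppOr R I.
Proof.
case/set0Pn=> i iI; apply/subset_leq_card/subsetP=> t.
by rewrite !inE => /forall_inP tI; apply/exists_inP; exists i; rewrite ?tI.
Qed.

Lemma suppAndS A B : A \subset B -> suppAnd R B <= suppAnd R A.
Proof.
move=> sAB; apply/subset_leq_card/subsetP=> t.
rewrite !inE => /forall_inP tB; apply/forall_inP=> i iA.
exact/tB/(subsetP sAB).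
Qed.

Lemma suppOrS A B : A \subset B -> suppOr R A <= suppOr R B.
Proof.
move=> sAB; apply/subset_leq_card/subsetP=> t.
rewrite !inE => /exists_inP[i iA ti]; apply/exists_inP.
by exists i; rewrite ?(subsetP sAB).
Qed.

Lemma bondS A B : A \subset B -> (bond R B <= bond R A)%E.
Proof.
move=> sAB; rewrite /bond; have [_|A0] := eqVneq A set0; first exact: leey.
have B0 : B != set0 by apply: contraNneq A0 => B0; rewrite -subset0 -B0.
rewrite (negPf B0) lee_fin ler_nat_ratio ?suppOrS //.
by rewrite suppAndS ?suppAnd_le_suppOr.
Qed.

Lemma bond_proper_lt A B : A \proper B -> suppAnd R B < suppAnd R A ->
  (bond R B < bond R A)%E.
Proof.
move=> pAB ltBA; rewrite /bond.
have [_ [b bB _]] := properP pAB.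
have B0 : B != set0 by apply/set0Pn; exists b.
rewrite (negPf B0); have [_|A0] := eqVneq A set0; first exact: ltey.
rewrite lte_fin ltr_nat_ratio ?ltBA ?suppAnd_le_suppOr //.
exact/suppOrS/proper_sub.
Qed.

Variables (minsupp : nat) (minbond : rat).

Lemma MinMMaxCR_sub_RCP : MinMMaxCR R minsupp minbond \subset RCP R minsupp minbond.
Proof. by apply/subsetP=> J; rewrite !inE => /orP[]/and3P[/andP[/andP[-> ->] _] _ _]. Qed.

Lemma maxset_CP_MaxCRCP J : maxset (mem (CP R minbond)) J ->
  suppAnd R J < minsupp -> J \in MaxCRCP R minsupp minbond.
Proof.
case/maxsetP=> CPJ maxJ rareJ.
have notCP (J1 : {set Item}) : J \proper J1 -> (bond R J1 < minbond%:E)%E.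
  move=> pJ1; rewrite ltNge; apply/negP=> CPJ1.
  have J1J : J1 = J by apply: maxJ; rewrite ?inE ?proper_sub.
  by rewrite J1J properxx in pJ1.
move: (CPJ); rewrite !inE => bondJ; rewrite rareJ bondJ /=.
apply/andP; split; apply/forall_inP=> J1 /notCP //.
by move/lt_le_trans; apply.
Qed.

Lemma minset_rare_MinMRCP K : minset (fun K => suppAnd R K < minsupp) K ->
  K \in CP R minbond -> K \in MinMRCP R minsupp minbond.
Proof.
case/minsetP=> rareK minK CPK.
have frequent (K1 : {set Item}) : K1 \proper K -> minsupp <= suppAnd R K1.
  move=> pK1; rewrite leqNgt; apply/negP=> rareK1.
  have K1K : K1 = K by apply: minK; rewrite ?proper_sub.
  by rewrite K1K properxx in pK1.
move: CPK; rewrite !inE => -> /=; rewrite rareK /=.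
apply/andP; split; apply/forall_inP=> K1 pK1.
  by apply: bond_proper_lt => //; apply: leq_trans rareK (frequent K1 pK1).
exact: frequent.
Qed.

Lemma RCP_sandwich I : (I \in RCP R minsupp minbond) =
  [exists J in MinMMaxCR R minsupp minbond, I \subset J] &&
  [exists K in MinMMaxCR R minsupp minbond, K \subset I].
Proof.
apply/idP/andP=> [|[/exists_inP[J repJ sIJ] /exists_inP[K repK sKI]]]; last first.
  move: repJ repK => /(subsetP MinMMaxCR_sub_RCP) + /(subsetP MinMMaxCR_sub_RCP).
  rewrite !inE => /andP[bondJ _] /andP[_ rareK].
  by rewrite (le_trans bondJ (bondS sIJ)) (leq_ltn_trans (suppAndS sKI) rareK).
rewrite inE => /andP[CPI rareI]; split; apply/exists_inP.
  have [J maxJ sIJ] := maxset_exists CPI.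
  exists J; rewrite // inE maxset_CP_MaxCRCP //.
  exact: leq_ltn_trans (suppAndS sIJ) rareI.
have [K minK sKI] := @minset_exists _ (fun K => suppAnd R K < minsupp) I rareI.
exists K; rewrite // inE minset_rare_MinMRCP ?orbT //.
by move: CPI; rewrite !inE => /le_trans; apply; apply: bondS.
Qed.

Lemma isSome_rep J : isSome (rep R minsupp minbond J) = (J \in MinMMaxCR R minsupp minbond).
Proof. by rewrite /rep; case: ifP. Qed.

End Patterns.

Definition decide_RCP (Item : finType) (r : {set Item} -> option (nat * \bar rat))
    (I : {set Item}) : bool :=
  [exists J, isSome (r J) && (I \subset J)] && [exists K, isSome (r K) && (K \subset I)].

Theorem mainTheorem8 (Item : finType) (minsupp : nat) (minbond : rat) :
  exists dec : ({set Item} -> option (nat * \bar rat)) -> {set Item} -> bool,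
    forall (Tr : finType) (R : {set Tr * Item}) (I : {set Item}),
      dec (rep R minsupp minbond) I = (I \in RCP R minsupp minbond).
Proof.
exists (@decide_RCP Item) => Tr R I; rewrite RCP_sandwich.
by congr (_ && _); apply: eq_existsb => J; rewrite isSome_rep.
Qed.
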